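(* Let $\alpha\ge 0$, let $K\subset\mathbb{R}^d$ be a compact set with $\mathcal{H}^{\alpha}(K)<a$ (where $a>0$), and let $\varepsilon>0$. Then there exist a natural number $M$ and a family $\mathfrak{B}$ of closed balls such that: 1) $\mathfrak{B}$ covers $K$; 2) the center of every ball in $\mathfrak{B}$ lies in $K$ and its radius does not exceed $\varepsilon$; 3) $|\mathfrak{B}|=M$ and $\sum_{\overline{B}_{r_i}(x_i)\in\mathfrak{B}} r_i^{\alpha}<a$; 4) for every family $\mathfrak{B}'$ of closed balls satisfying 1), 2), 3) one has $\sum_{\overline{B}_{r_i}(x_i)\in\mathfrak{B}} r_i^{\alpha}\leq\sum_{\overline{B}_{r_i}(x_i)\in\mathfrak{B}'} r_i^{\alpha}$.
   Context: $\overline{B}_r(x)$ denotes the closed ball of radius $r\ge 0$ centered at $x$; $\mathcal{H}^\alpha$ is the $\alpha$-dimensional Hausdorff measure. The number $M$ may depend on $K$ and $\varepsilon$; in condition 3) for $\mathfrak{B}'$, the same $M$ is used. *)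

From HB Require Import structures.
From mathcomp Require Import all_boot all_order all_algebra.
From mathcomp Require Import all_classical all_reals all_analysis.
Set Implicit Arguments. Unset Strict Implicit. Unset Printing Implicit Defensive.
Import Order.TTheory GRing.Theory Num.Theory.
Import numFieldNormedType.Exports.
Local Open Scope classical_set_scope.
Local Open Scope ring_scope.

(* R^d is modelled as row vectors 'rV[R]_d, with the EUCLIDEAN norm
   (mathcomp's built-in norm on matrices is the sup norm, so we define it). *)
Definition eucl_norm (R : realType) (d : nat) (v : 'rV[R]_d) : R :=
  Num.sqrt (\sum_(i < d) (v ord0 i) ^+ 2).

Definition cball (R : realType) (d : nat) (x : 'rV[R]_d) (r : R) : set 'rV[R]_d :=
  [set y | eucl_norm (y - x) <= r].

Definition ediam (R : realType) (d : nat) (U : set 'rV[R]_d) : \bar R :=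
  ereal_sup [set (eucl_norm (x - y))%:E | x in U & y in U].

Definition hcost (R : realType) (d : nat) (alpha : R) (U : set 'rV[R]_d) : \bar R :=
  if pselect (U = set0) then 0%E else (powR (fine (ediam U)) alpha)%:E.

Definition hausdorff_content (R : realType) (d : nat) (alpha delta : R)
    (A : set 'rV[R]_d) : \bar R :=
  ereal_inf [set (\sum_(0 <= i <oo) hcost alpha (U i))%E |
             U in [set U : nat -> set 'rV[R]_d |
                    A `<=` \bigcup_i U i /\ forall i, (ediam (U i) <= delta%:E)%E]].

(* H^alpha(A) = lim_{delta -> 0+} H^alpha_delta(A) = sup_{delta > 0} H^alpha_delta(A) *)
Definition hausdorff_measure (R : realType) (d : nat) (alpha : R)
    (A : set 'rV[R]_d) : \bar R :=
  ereal_sup [set hausdorff_content alpha delta A | delta in [set delta : R | 0 < delta]].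

Definition admissible_family (R : realType) (d : nat) (alpha a eps : R)
    (K : set 'rV[R]_d) (M : nat) (c : 'I_M -> 'rV[R]_d) (r : 'I_M -> R) : Prop :=
  [/\ K `<=` \bigcup_i cball (c i) (r i),
      (forall i, K (c i) /\ 0 <= r i /\ r i <= eps)
    & \sum_(i < M) powR (r i) alpha < a].

From HB Require Import structures.
From mathcomp Require Import all_boot all_order all_algebra.
From mathcomp Require Import all_classical all_reals all_analysis.
From mathcomp Require Import finmap lra.
Import Order.TTheory GRing.Theory Num.Theory.
Import numFieldNormedType.Exports ArrowAsProduct.
Local Open Scope classical_set_scope.
Local Open Scope ring_scope.

(* Existence: since H^alpha(K) < a, some countable cover (U_i) of K by sets of
   diameter at most eps/2 has cost sum_i diam(U_i)^alpha < a.  Each U_i meeting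
   K lies in an open ball centred in K whose radius r_i <= eps exceeds diam U_i
   by so little that r_i^alpha <= diam(U_i)^alpha + e/2^(i+1), where e is half
   the gap below a; compactness of K extracts finitely many of these balls, and
   their cost stays below a.
   Minimality: with M fixed, families of M balls form the compact set
   (K x [0, eps])^M, covering K is a closed condition on it, and the cost is
   continuous, so the cost attains its minimum on the covering families. *)

Lemma proj_fst_continuous {I : eqType} {X Y : topologicalType} (i : I) :
  continuous (fun g : I -> X * Y => (g i).1).
Proof.
move=> f; have fst_at : {for f i, continuous fst} by exact: cvg_fst.
exact (continuous_comp (@proj_continuous _ _ i f) fst_at).
Qed.

Lemma proj_snd_continuous {I : eqType} {X Y : topologicalType} (i : I) :
  continuous (fun g : I -> X * Y => (g i).2).
Proof.
move=> f; have snd_at : {for f i, continuous snd} by exact: cvg_snd.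
exact (continuous_comp (@proj_continuous _ _ i f) snd_at).
Qed.

Lemma continuous_right_le {R : realType} {f : R -> R} {x eps eta : R} :
  {for x, continuous f} -> x < eps -> 0 < eta ->
  exists r, [/\ x < r, r <= eps & f r <= f x + eta].
Proof.
move=> fx xe eta0.
have fxeta : \forall r \near x, f r <= f x + eta.
  move/cvgrPdist_lt : fx => /(_ _ eta0); apply: filterS => r /ltW.
  by rewrite ler_distlC => /andP[].
apply: (@filter_ex _ x^'+); near=> r; split.
- by near: r; exact: nbhs_right_gt.
- by near: r; exact: nbhs_right_le.
- by near: r; exact: cvg_within fxeta.
Unshelve. all: by end_near. Qed.

Lemma continuous_powR_norm {R : realType} {p : R} :
  0 <= p -> continuous (fun x : R => `|x| `^ p).
Proof.
rewrite le_eqVlt => /predU1P[<-|p0 x].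
  by under eq_fun do rewrite powRr0; exact: cst_continuous.
have [->|x0] := eqVneq x 0.
  rewrite /continuous_at normr0 powR0 ?gt_eqF//; apply/cvgrPdist_lt => e e0.
  have eE : e = (e `^ p^-1) `^ p by rewrite -powRrM mulVf ?gt_eqF ?powRr1 ?ltW.
  near=> y; rewrite sub0r normrN ger0_norm ?powR_ge0// eE.
  apply: gt0_ltr_powR; rewrite ?nnegrE ?powR_ge0//.
  near: y; apply/nbhs_normP; exists (e `^ p^-1); first by rewrite /= powR_gt0.
  by move=> y /=; rewrite sub0r normrN.
have powR_cont : {for `|x|, continuous (fun y : R => y `^ p)}.
  apply/differentiable_continuous/derivable1_diffP/derivable_powR.
  by rewrite in_itv /= andbT normr_gt0.
have norm_cont : {for x, continuous (fun y : R => `|y|)} by exact: norm_continuous.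
exact: (continuous_comp norm_cont powR_cont).
Unshelve. all: by end_near. Qed.

Lemma fset_sum_le_series_geometric {R : realType} (u : (\bar R)^nat) (F : {fset nat})
    (e : R) :
  (forall i, (0 <= u i)%E) -> 0 <= e ->
  (\sum_(i <- F) (u i + (e / (2 ^ i.+1)%:R)%:E) <= \sum_(0 <= i <oo) u i + e%:E)%E.
Proof.
move=> u0 e0; apply: le_trans (epsilon_trick xpredT u0 e0).
apply: lee_sum_fset_lim => i _; rewrite adde_ge0// lee_fin.
by rewrite divr_ge0// ler0n.
Qed.

Section ball_covers.
Context {R : realType} {d : nat}.
Implicit Types (U K : set 'rV[R]_d).

Lemma eucl_norm_continuous : continuous (@eucl_norm R d).
Proof.
move=> v; apply: (@continuous_comp _ _ _ (fun v : 'rV[R]_d => \sum_(i < d) v ord0 i ^+ 2)).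
  apply: continuous_big => [|i _ w]; first exact: add_continuous.
  apply: (@continuous_comp _ _ _ (fun v : 'rV[R]_d => v ord0 i) (fun x : R => x ^+ 2)).
    exact: coord_continuous.
  exact: exprn_continuous.
exact: sqrt_continuous.
Qed.

Lemma eucl_norm_subr_continuous (y : 'rV[R]_d) :
  continuous (fun v : 'rV[R]_d => eucl_norm (v - y)).
Proof.
move=> v; have := @continuousB R _ _ id (fun=> y) v (fun t h => h) (@cst_continuous _ _ y v).
by move/continuous_comp; apply; apply: eucl_norm_continuous.
Qed.

Lemma eucl_norm_subl_continuous (y : 'rV[R]_d) :
  continuous (fun v : 'rV[R]_d => eucl_norm (y - v)).
Proof.
move=> v; have := @continuousB R _ _ (fun=> y) id v (@cst_continuous _ _ y v) (fun t h => h).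
by move/continuous_comp; apply; apply: eucl_norm_continuous.
Qed.

Lemma eucl_norm_le_ediam {U u v} : U u -> U v -> ((eucl_norm (u - v))%:E <= ediam U)%E.
Proof. by move=> Uu Uv; apply: ereal_sup_ubound; exists u => //; exists v. Qed.

Lemma ediam_ge0 {U} : U !=set0 -> (0 <= ediam U)%E.
Proof.
move=> [u Uu]; have := eucl_norm_le_ediam Uu Uu.
by rewrite subrr /eucl_norm big1 ?sqrtr0// => i _; rewrite mxE expr0n.
Qed.

Lemma hcost_ge0 (alpha : R) U : (0 <= hcost alpha U)%E.
Proof. by rewrite /hcost; case: pselect => U0; rewrite ?lee_fin ?powR_ge0. Qed.

Lemma hausdorff_measure_lt_cover {alpha a delta : R} {K} :
    0 < delta -> (hausdorff_measure alpha K < a%:E)%E ->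
  exists2 U : nat -> set 'rV[R]_d,
    K `<=` \bigcup_i U i /\ (forall i, (ediam (U i) <= delta%:E)%E) &
    (\sum_(0 <= i <oo) hcost alpha (U i) < a%:E)%E.
Proof.
move=> delta0 HKa; have : (hausdorff_content alpha delta K < a%:E)%E.
  by apply: le_lt_trans HKa; apply: ereal_sup_ubound; exists delta.
by case/ereal_inf_lt => _ [U UK <-]; exists U.
Qed.

Lemma small_set_sub_ball {alpha delta eps eta : R} {K U} :
    0 <= alpha -> (U `&` K) !=set0 -> (ediam U <= delta%:E)%E -> delta < eps ->
    0 < eta ->
  exists c r, [/\ K c, 0 <= r, r <= eps,
    U `<=` [set z | eucl_norm (z - c) < r] &
    ((r `^ alpha)%:E <= hcost alpha U + eta%:E)%E].
Proof.
move=> alpha0 [c [Uc Kc]] dU de eta0.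
have dU0 := ediam_ge0 (ex_intro _ c Uc).
set x := fine (ediam U).
have xE : ediam U = x%:E by rewrite fineK// ge0_fin_numE// (le_lt_trans dU) ?ltry.
have x0 : 0 <= x by rewrite -lee_fin -xE.
have xe : x < eps by apply: le_lt_trans de; rewrite -lee_fin -xE.
have [r [xr re]] := continuous_right_le (continuous_powR_norm alpha0 x) xe eta0.
have r0 : 0 <= r := le_trans x0 (ltW xr).
rewrite !ger0_norm// => powr; exists c, r; split => //.
  by move=> z Uz /=; apply: le_lt_trans xr; rewrite -lee_fin -xE eucl_norm_le_ediam.
rewrite /hcost; case: pselect => [U0|U0]; first by rewrite U0 in Uc.
by rewrite -EFinD lee_fin.
Qed.

Lemma countable_ball_cover {alpha delta eps e : R} {K} (U : nat -> set 'rV[R]_d) :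
    0 <= alpha -> delta < eps -> 0 < e ->
    K `<=` \bigcup_i U i -> (forall i, (ediam (U i) <= delta%:E)%E) ->
  exists (D : set nat) (c : nat -> 'rV[R]_d) (r : nat -> R),
    [/\ K `<=` cover D (fun i => [set z | eucl_norm (z - c i) < r i]),
        forall i, D i -> [/\ K (c i), 0 <= r i & r i <= eps]
      & forall i, D i ->
          ((r i `^ alpha)%:E <= hcost alpha (U i) + (e / (2 ^ i.+1)%:R)%:E)%E].
Proof.
move=> alpha0 de e0 KU dU; pose D := [set i | (U i `&` K) !=set0].
have ball_of i : exists cr : 'rV[R]_d * R, D i -> [/\ K cr.1, 0 <= cr.2, cr.2 <= eps,
    U i `<=` [set z | eucl_norm (z - cr.1) < cr.2] &
    ((cr.2 `^ alpha)%:E <= hcost alpha (U i) + (e / (2 ^ i.+1)%:R)%:E)%E].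
  have [Di|nDi] := pselect (D i); last by exists (0, 0) => /nDi.
  have eta0 : 0 < e / (2 ^ i.+1)%:R by rewrite divr_gt0// ltr0n expn_gt0.
  by have [c [r ball]] := small_set_sub_ball alpha0 Di (dU i) de eta0; exists (c, r).
have [cr crP] := choice ball_of.
exists D, (fun i => (cr i).1), (fun i => (cr i).2); split.
- move=> k Kk; have [i _ Uik] := KU k Kk; have Di : D i by exists k.
  by exists i => //; have [_ _ _ UW _] := crP i Di; exact: UW.
- by move=> i /crP[].
- by move=> i /crP[].
Qed.

Lemma exists_admissible_family {alpha a eps : R} {K} :
    0 <= alpha -> compact K -> (hausdorff_measure alpha K < a%:E)%E -> 0 < eps ->
  exists M (c : 'I_M -> 'rV[R]_d) (r : 'I_M -> R), admissible_family alpha a eps K c r.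
Proof.
move=> alpha0 cK HKa eps0.
have eps2_gt0 : 0 < eps / 2 by rewrite divr_gt0.
have [U [KU dU] Sa] := hausdorff_measure_lt_cover eps2_gt0 HKa.
set S := (\sum_(0 <= i <oo) hcost alpha (U i))%E in Sa.
have S0 : (0 <= S)%E by apply: nneseries_ge0 => i _ _; exact: hcost_ge0.
have Sfin : S \is a fin_num by rewrite ge0_fin_numE// (lt_trans Sa) ?ltry.
pose e := (a - fine S) / 2.
have e0 : 0 < e by rewrite divr_gt0// subr_gt0 -lte_fin fineK.
(* eps / 2 < eps leaves room to enlarge each diameter to a radius. *)
have eps2 : eps / 2 < eps by rewrite ltr_pdivrMr// ltr_pMr// ltr1n.
have [D [c [r [KW crK cost_r]]]] := countable_ball_cover U alpha0 eps2 e0 KU dU.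
have openW i : D i -> open [set z | eucl_norm (z - c i) < r i].
  move=> _; have := open_comp (D := [set y | y < r i])
    (fun z _ => eucl_norm_subr_continuous (c i) z).
  by apply; exact: open_lt.
move: cK; rewrite compact_cover => /(_ nat D _ openW KW)[F FD KF].
have DF (j : 'I_(size F)) : D (nth 0%N F j) by apply/set_mem/FD/mem_nth.
exists (size F), (fun j => c (nth 0%N F j)), (fun j => r (nth 0%N F j)); split.
- move=> k /KF[i /= iF Wik].
  have iF' : (index i F < size F)%N by rewrite index_mem.
  by exists (Ordinal iF') => //; rewrite /cball /= nth_index//; exact: ltW.
- by move=> j; have [] := crK _ (DF j).
rewrite (_ : \sum_(j < size F) _ = \sum_(i <- F) r i `^ alpha); last first.
  by rewrite [RHS](big_nth 0%N) big_mkord.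
rewrite -lte_fin -sumEFin.
apply: (le_lt_trans (y := \sum_(i <- F)
    (hcost alpha (U i) + (e / (2 ^ i.+1)%:R)%:E))%E).
  rewrite big_seq [X in (_ <= X)%E]big_seq; apply: lee_sum => i iF.
  exact/cost_r/set_mem/FD.
have := fset_sum_le_series_geometric (fun i => hcost alpha (U i)) F e
  (fun i => hcost_ge0 alpha (U i)) (ltW e0).
move/le_lt_trans; apply.
rewrite -/S -(fineK Sfin) -EFinD lte_fin.
by move: e0; rewrite /e; lra.
Qed.

Lemma closed_ball_covers K (M : nat) :
  closed [set f : 'I_M -> 'rV[R]_d * R | K `<=` \bigcup_i cball (f i).1 (f i).2].
Proof.
have -> : [set f : 'I_M -> 'rV[R]_d * R | K `<=` \bigcup_i cball (f i).1 (f i).2] =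
    \bigcap_(y in K) \bigcup_(i in [set: 'I_M])
      (fun f => eucl_norm (y - (f i).1) - (f i).2) @^-1` [set x | x <= 0].
  by rewrite predeqE => f; split => Kf y /Kf[i _ yi]; exists i; rewrite //= subr_le0 in yi *.
apply: closed_bigI => y _; apply: closed_bigcup => [|i _]; first exact: finite_finset.
apply: preimage_closed => [f _|]; last exact: closed_le.
have norm_cont := continuous_comp (proj_fst_continuous i f) (eucl_norm_subl_continuous y _).
exact (continuousB norm_cont (proj_snd_continuous i f)).
Qed.

Lemma exists_min_admissible_family {alpha a eps : R} {K} {M : nat}
    {c0 : 'I_M -> 'rV[R]_d} {r0 : 'I_M -> R} :
    0 <= alpha -> compact K -> admissible_family alpha a eps K c0 r0 ->
  exists (c : 'I_M -> 'rV[R]_d) (r : 'I_M -> R),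
    admissible_family alpha a eps K c r /\
    (forall (c' : 'I_M -> 'rV[R]_d) (r' : 'I_M -> R),
        admissible_family alpha a eps K c' r' ->
        \sum_(i < M) powR (r i) alpha <= \sum_(i < M) powR (r' i) alpha).
Proof.
move=> alpha0 cK adm0.
pose P := [set f : 'I_M -> 'rV[R]_d * R | forall i, (K `*` `[0, eps]) (f i)].
pose C := [set f : 'I_M -> 'rV[R]_d * R | K `<=` \bigcup_i cball (f i).1 (f i).2].
(* The norm makes the cost continuous on the whole space, negative radii included. *)
pose cost (f : 'I_M -> 'rV[R]_d * R) := \sum_(i < M) `|(f i).2| `^ alpha.
have cPC : compact (P `&` C).
  apply: compact_closedI (closed_ball_covers K M).
  apply: (@tychonoff _ _ (fun=> K `*` `[0, eps])) => i.
  by apply: compact_setX => //; exact: segment_compact.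
have cost_cont : continuous cost.
  apply: continuous_big => [|i _ g]; first exact: add_continuous.
  exact: (continuous_comp (proj_snd_continuous i g) (continuous_powR_norm alpha0 _)).
have admPC c r : admissible_family alpha a eps K c r ->
    (P `&` C) (fun i => (c i, r i)) /\
    cost (fun i => (c i, r i)) = \sum_(i < M) r i `^ alpha.
  move=> [Kcr cr _]; split; first split => // i.
    by have [? [? ?]] := cr i; split; rewrite //= in_itv /=; apply/andP.
  by apply: eq_bigr => i _ /=; rewrite ger0_norm //; have [_ []] := cr i.
have [f0PC _] := admPC _ _ adm0.
have [f /set_mem[Pf Cf] fmin] :=
  compact_EVT_min (ex_intro _ _ f0PC) cPC (continuous_subspaceT cost_cont).
have f_ge0 i : 0 <= (f i).2 by have [_] := Pf i; rewrite /= in_itv /= => /andP[].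
have costf : cost f = \sum_(i < M) (f i).2 `^ alpha.
  by apply: eq_bigr => i _; rewrite ger0_norm.
have min_f c r : admissible_family alpha a eps K c r ->
    \sum_(i < M) (f i).2 `^ alpha <= \sum_(i < M) r i `^ alpha.
  by move=> /admPC[PCcr <-]; rewrite -costf; apply/fmin/mem_set.
exists (fun i => (f i).1), (fun i => (f i).2); split => //.
split => // [i|]; first by have [/= Kfi] := Pf i; rewrite in_itv /= => /andP[].
by apply: le_lt_trans (min_f _ _ adm0) _; case: adm0.
Qed.

End ball_covers.

Theorem lemma9 (R : realType) (d : nat) (alpha a eps : R) (K : set 'rV[R]_d) :
  0 <= alpha -> compact K -> 0 < a -> (hausdorff_measure alpha K < a%:E)%E ->
  0 < eps ->
  exists (M : nat) (c : 'I_M -> 'rV[R]_d) (r : 'I_M -> R),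
    admissible_family alpha a eps K c r /\
    (forall (c' : 'I_M -> 'rV[R]_d) (r' : 'I_M -> R),
        admissible_family alpha a eps K c' r' ->
        \sum_(i < M) powR (r i) alpha <= \sum_(i < M) powR (r' i) alpha).
Proof.
(* 0 < a is implied by 0 <= H^alpha(K) < a. *)
move=> alpha0 cK _ HKa eps0.
have [M [c [r adm]]] := exists_admissible_family alpha0 cK HKa eps0.
by exists M; exact: exists_min_admissible_family alpha0 cK adm.
Qed.
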